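(* Let $a,b$ be positive integers with $3\mid a$ and $3\mid b$. If the Aztec rectangle $\mathcal{AR}_{a,b}$ has a cover by L-trominoes, then $\mathcal{AR}_{a+2,b+2}$ has a cover by L-trominoes.
   Context: A cell is a unit square $[i,i+1]\times[j,j+1]$ with $i,j\in\mathbb{Z}$, labelled $(i,j)$. An L-tromino is a set of three cells equal to a $2\times 2$ block of cells with one cell removed. A cover of a region $R$ (a finite edge-connected set of cells) is a set of pairwise disjoint L-trominoes contained in $R$ whose union is $R$. For positive integers $a,b$, the Aztec rectangle $\mathcal{AR}_{a,b}$ is (up to translation) the region consisting of the cells $(i,j)\in\mathbb{Z}^2$ with $0\le i+j\le 2b$ and $1\le j-i\le 2a+1$; it has $a$ cells along its southwestern side and $b$ cells along its northwestern side. *)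

From Stdlib Require Import ZArith List.
Open Scope Z_scope.

(* The cell [i,i+1] x [j,j+1] is labelled (i,j). *)
Definition cell := (Z * Z)%type.

Definition region := cell -> Prop.

Definition block (i j : Z) : region :=
  fun c => i <= fst c <= i + 1 /\ j <= snd c <= j + 1.

Definition is_L_tromino (T : region) : Prop :=
  exists (i j : Z) (m : cell), block i j m /\
    forall c, T c <-> (block i j c /\ c <> m).

Definition is_cover (R : region) (C : list region) : Prop :=
  (forall T, In T C -> is_L_tromino T) /\
  (forall T, In T C -> forall c, T c -> R c) /\
  (forall k l, (k < length C)%nat -> (l < length C)%nat -> k <> l ->
     forall c, ~ (nth k C (fun _ => False) c /\ nth l C (fun _ => False) c)) /\
  (forall c, R c -> exists T, In T C /\ T c).

Definition has_cover (R : region) : Prop := exists C, is_cover R C.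

Definition aztec_rect (a b : Z) : region :=
  fun c => 0 <= fst c + snd c <= 2 * b /\ 1 <= snd c - fst c <= 2 * a + 1.

(* In diagonal coordinates s = i + j, d = j - i, the region AR_{a+2,b+2} is
   AR_{a,b} translated by two cells upwards, surrounded by a pinwheel frame
   of four bands of width 2: two of length 2a + 3 and two of length 2b + 3.
   A 2 x 3 box in diagonal coordinates consists of three cells forming an
   L-tromino, and since 3 divides 2a + 3 and 2b + 3 each band is a row of
   such boxes. *)
From Stdlib Require Import ZArith List Lia.
Open Scope Z_scope.

Definition diag_box (s1 s2 d1 d2 : Z) : region :=
  fun c => s1 <= fst c + snd c <= s2 /\ d1 <= snd c - fst c <= d2.

Definition preimage (g : cell -> cell) (R : region) : region := fun c => R (g c).

Definition translate (u v : Z) (c : cell) : cell := (fst c + u, snd c + v).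

(* Reflection in a vertical axis exchanges the diagonal coordinates. *)
Definition reflect (c : cell) : cell := (- fst c, snd c).

Lemma pair_neq (p q x y : Z) : (p, q) <> (x, y) -> p <> x \/ q <> y.
Proof.
  intros H; destruct (Z.eq_dec p x), (Z.eq_dec q y); subst; auto.
Qed.

Lemma has_cover_ext (R R' : region) :
  (forall c, R c <-> R' c) -> has_cover R -> has_cover R'.
Proof.
  intros H [C [HL [Hin [Hdisj Hcov]]]]; exists C; repeat split; auto.
  - intros T HT c Hc; apply H; eauto.
  - intros c Hc; apply Hcov, H, Hc.
Qed.

Lemma has_cover_empty (R : region) : (forall c, ~ R c) -> has_cover R.
Proof.
  intros H; exists nil; repeat split; simpl; try tauto.
  - intros k l Hk; lia.
  - intros c Hc; contradiction (H c).
Qed.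

Lemma has_cover_L_tromino (T : region) : is_L_tromino T -> has_cover T.
Proof.
  intros HT; exists (T :: nil); repeat split; simpl.
  - intros T' [<-|[]]; exact HT.
  - intros T' [<-|[]]; auto.
  - intros k l Hk Hl Hkl; lia.
  - intros c Hc; exists T; auto.
Qed.

Lemma has_cover_union (R1 R2 : region) :
  has_cover R1 -> has_cover R2 -> (forall c, R1 c -> R2 c -> False) ->
  has_cover (fun c => R1 c \/ R2 c).
Proof.
  intros [C1 [A1 [A2 [A3 A4]]]] [C2 [B1 [B2 [B3 B4]]]] D.
  exists (C1 ++ C2); repeat split.
  - intros T HT; apply in_app_or in HT as [HT|HT]; auto.
  - intros T HT c Hc; apply in_app_or in HT as [HT|HT]; [left|right]; eauto.
  - intros k l Hk Hl Hkl c [Hck Hcl].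
    rewrite length_app in Hk, Hl.
    destruct (Nat.lt_ge_cases k (length C1)) as [k1|k1];
    destruct (Nat.lt_ge_cases l (length C1)) as [l1|l1].
    + rewrite app_nth1 in Hck, Hcl by auto. exact (A3 k l k1 l1 Hkl c (conj Hck Hcl)).
    + rewrite app_nth1 in Hck by auto. rewrite app_nth2 in Hcl by auto.
      apply (D c).
      * eapply A2; [apply nth_In; exact k1|exact Hck].
      * eapply B2; [|exact Hcl]; apply nth_In; lia.
    + rewrite app_nth2 in Hck by auto. rewrite app_nth1 in Hcl by auto.
      apply (D c).
      * eapply A2; [apply nth_In; exact l1|exact Hcl].
      * eapply B2; [|exact Hck]; apply nth_In; lia.
    + rewrite app_nth2 in Hck, Hcl by auto.
      refine (B3 (k - length C1)%nat (l - length C1)%nat _ _ _ c (conj Hck Hcl)); lia.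
  - intros c [Hc|Hc].
    + destruct (A4 c Hc) as [T [HT HTc]]; exists T; auto using in_or_app.
    + destruct (B4 c Hc) as [T [HT HTc]]; exists T; auto using in_or_app.
Qed.

(* No injectivity of [g] is needed: a cell lying in two pulled-back trominoes
   has its image in the two original ones. *)
Lemma has_cover_preimage (g : cell -> cell) (R : region) :
  (forall T, is_L_tromino T -> is_L_tromino (preimage g T)) ->
  has_cover R -> has_cover (preimage g R).
Proof.
  intros Hg [C [A1 [A2 [A3 A4]]]]; exists (map (preimage g) C); repeat split.
  - intros T HT; apply in_map_iff in HT as [T' [<- HT']]; auto.
  - intros T HT c Hc; apply in_map_iff in HT as [T' [<- HT']].
    unfold preimage in *; eauto.
  - intros k l Hk Hl Hkl c [Hck Hcl].
    rewrite length_map in Hk, Hl.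
    rewrite nth_indep with (d' := preimage g (fun _ => False)) in Hck, Hcl
      by (rewrite length_map; auto).
    rewrite map_nth in Hck, Hcl. exact (A3 k l Hk Hl Hkl _ (conj Hck Hcl)).
  - intros c Hc; destruct (A4 _ Hc) as [T [HT HTc]].
    exists (preimage g T); auto using in_map.
Qed.

Lemma is_L_tromino_translate (u v : Z) (T : region) :
  is_L_tromino T -> is_L_tromino (preimage (translate u v) T).
Proof.
  intros [i [j [[m1 m2] [Hm H]]]].
  exists (i - u), (j - v), (m1 - u, m2 - v).
  unfold block in *; simpl in *; split; [lia|].
  intros [p q]; unfold preimage, translate; simpl; rewrite H; unfold block; simpl.
  split; intros [H1 H2]; split; try lia;
    intro E; injection E; intros; apply H2; f_equal; lia.
Qed.

Lemma is_L_tromino_reflect (T : region) :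
  is_L_tromino T -> is_L_tromino (preimage reflect T).
Proof.
  intros [i [j [[m1 m2] [Hm H]]]].
  exists (- i - 1), j, (- m1, m2).
  unfold block in *; simpl in *; split; [lia|].
  intros [p q]; unfold preimage, reflect; simpl; rewrite H; unfold block; simpl.
  split; intros [H1 H2]; split; try lia;
    intro E; injection E; intros; apply H2; f_equal; lia.
Qed.

(* A 2 x 3 box in diagonal coordinates has only three cells; which one of the
   enclosing 2 x 2 block is missing depends on the parity of [s + d]. *)
Lemma diag_box_L_tromino (s d : Z) : is_L_tromino (diag_box s (s + 1) d (d + 2)).
Proof.
  unfold is_L_tromino, diag_box, block.
  destruct (Z.Even_or_Odd (s + d)) as [[t Ht]|[t Ht]].
  - exists (t - d - 1), t, (t - d - 1, t); simpl; split; [lia|].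
    intros [p q]; simpl; split.
    + intros H; split; [lia|]; intro E; injection E; intros; lia.
    + intros [H1 H2%pair_neq]; lia.
  - exists (t - d), (t + 1), (t - d + 1, t + 2); simpl; split; [lia|].
    intros [p q]; simpl; split.
    + intros H; split; [lia|]; intro E; injection E; intros; lia.
    + intros [H1 H2%pair_neq]; lia.
Qed.

Lemma has_cover_diag_band (s d N : Z) :
  0 <= N -> has_cover (diag_box s (s + 1) d (d + 3 * N - 1)).
Proof.
  revert N; apply natlike_ind.
  - apply has_cover_empty; unfold diag_box; lia.
  - intros N HN IH.
    pose proof (has_cover_L_tromino _ (diag_box_L_tromino s (d + 3 * N))) as Hlast.
    unfold diag_box in *.
    eapply has_cover_ext; [|exact (has_cover_union _ _ IH Hlast ltac:(intros c; cbv beta; lia))].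
    intros c; lia.
Qed.

Theorem lemma2 (a b : Z) :
  0 < a -> 0 < b -> (3 | a) -> (3 | b) ->
  has_cover (aztec_rect a b) -> has_cover (aztec_rect (a + 2) (b + 2)).
Proof.
  intros Ha Hb [m Hm] [n Hn] HC.
  pose proof (has_cover_preimage _ _ (is_L_tromino_translate 0 (-2)) HC) as Hcore.
  pose proof (has_cover_diag_band 0 1 (2 * m + 1) ltac:(lia)) as Hsouthwest.
  pose proof (has_cover_diag_band (2 * b + 3) 3 (2 * m + 1) ltac:(lia)) as Hnortheast.
  pose proof (has_cover_preimage _ _ is_L_tromino_reflect
    (has_cover_diag_band (2 * a + 4) 0 (2 * n + 1) ltac:(lia))) as Hnorthwest.
  pose proof (has_cover_preimage _ _ is_L_tromino_reflect
    (has_cover_diag_band 1 2 (2 * n + 1) ltac:(lia))) as Hsoutheast.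
  unfold preimage, translate, reflect, aztec_rect, diag_box in *; cbn [fst snd] in *.
  pose proof (has_cover_union _ _ Hsouthwest Hnortheast ltac:(intros c; cbv beta; lia)) as Hsw_ne.
  pose proof (has_cover_union _ _ Hsoutheast Hnorthwest ltac:(intros c; cbv beta; lia)) as Hse_nw.
  pose proof (has_cover_union _ _ Hsw_ne Hse_nw ltac:(intros c; cbv beta; lia)) as Hframe.
  pose proof (has_cover_union _ _ Hcore Hframe ltac:(intros c; cbv beta; lia)) as Hall.
  eapply has_cover_ext; [|exact Hall].
  intros c; lia.
Qed.
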